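(* The assignment $\sigma:\mathcal W\to\mathfrak V$, $R_{\mathbf i}\mapsto S_{(\mathbf i,\mathbf m)}$, is a well-defined bijection (not necessarily a monoid homomorphism).
   Context: $I$ countable, $A=(a_{ij})$ a Borcherds–Cartan matrix ($a_{ii}=2$ or $a_{ii}\in\mathbb Z_{\le0}$; $a_{ij}\in\mathbb Z_{\le0}$ for $i\ne j$; $a_{ij}=0\iff a_{ji}=0$), $I^{re}=\{a_{ii}=2\}$, $I^{im}=I\setminus I^{re}$, with datum $(A,\{\alpha_i\},\{\alpha_i^\vee\},P,P^\vee)$, $\alpha_i^\vee(\alpha_j)=a_{ij}$, and $r_i\in GL(\mathfrak h^* )$, $r_i(\mu)=\mu-\alpha_i^\vee(\mu)\alpha_i$. The monoid $\mathcal W$ is generated by symbols $r_i$ ($i\in I$) subject to: $r_i^2=1$ for $i\in I^{re}$; $(r_ir_j)^m=(r_jr_i)^m=1$ for $i\neq j$ in $I^{re}$ when the order of $r_ir_j$ in $GL(\mathfrak h^* )$ is $m\in\{2,3,4,6\}$; $r_ir_j=r_jr_i$ for $i\in I^{im}$, $j\in I\setminus\{i\}$ with $a_{ij}=0$. For a finite sequence $\mathbf i=(i_k,\ldots,i_1)$ in $I$, $R_{\mathbf i}=r_{i_k}\cdots r_{i_1}\in\mathcal W$. Let $\tilde I=\{(i,1)\}_{i\in I^{re}}\sqcup\{(i,m)\}_{i\in I^{im},m\in\mathbb Z_{\ge1}}$ and $\mathfrak W$ the Coxeter group with generators $s_{(i,m)}$, $(i,m)\in\tilde I$, and Coxeter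 matrix $x_{(i,m),(i,m)}=1$; $x_{(i,1),(j,1)}$ = order of $r_ir_j$ in $GL(\mathfrak h^* )$ for $i,j\in I^{re}$; and for $i\in I^{im}$, $m\ge1$ and $(j,n)\ne(i,m)$: $x_{(i,m),(j,n)}=x_{(j,n),(i,m)}=2$ if $a_{ij}=0$ and $\infty$ otherwise. For $\mathbf i=(i_k,\dots,i_1)$, the ordered index $(\mathbf i,\mathbf m)$ has $\mathbf m=(m_k,\ldots,m_1)$ with $m_s=1$ if $i_s\in I^{re}$ and $m_s=\#\{1\le t\le s:i_t=i_s\}$ if $i_s\in I^{im}$; $S_{(\mathbf i,\mathbf m)}=s_{(i_k,m_k)}\cdots s_{(i_1,m_1)}\in\mathfrak W$, and $\mathfrak V=\{S_{(\mathbf i,\mathbf m)}:\mathbf i\text{ a finite sequence in }I\}\subset\mathfrak W$. *)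

From HB Require Import structures.
From mathcomp Require Import all_boot all_order all_algebra.
Set Implicit Arguments. Unset Strict Implicit. Unset Printing Implicit Defensive.
Import GRing.Theory.
Local Open Scope ring_scope.

(* Congruence (two-sided, equivalence) closure on words of a relation R:
   the equality of the monoid presented by generators T and relations R. *)
Inductive congr_cl (T : Type) (R : seq T -> seq T -> Prop) : seq T -> seq T -> Prop :=
| cc_rel s u v t : R u v -> congr_cl R (s ++ u ++ t) (s ++ v ++ t)
| cc_refl w : congr_cl R w w
| cc_sym w w' : congr_cl R w w' -> congr_cl R w' w
| cc_trans w1 w2 w3 : congr_cl R w1 w2 -> congr_cl R w2 w3 -> congr_cl R w1 w3.

Definition altw (T : Type) (x y : T) (m : nat) : seq T := flatten (nseq m [:: x; y]).

Section BC.
Variable I : countType.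
Variable a : I -> I -> int.

Definition is_real (i : I) : bool := a i i == 2%:Z.

Definition BC_matrix : Prop :=
  [/\ (forall i, a i i = 2%:Z \/ a i i <= 0),
      (forall i j, i != j -> a i j <= 0) &
      (forall i j, a i j = 0 <-> a j i = 0)].

Section Realization.
Variables (F : fieldType) (V : lmodType F) (alpha : I -> V) (alphav : I -> V -> F).

(* h^dual = V over a field F of characteristic 0; alpha_i in h^dual linearly
   independent; alpha_i^vee linear forms with alpha_i^vee(alpha_j) = a_ij. *)
Definition realization : Prop :=
  [/\ [pchar F] =i pred0,
      (forall i c u v, alphav i (c *: u + v) = c * alphav i u + alphav i v),
      (forall i j, alphav i (alpha j) = (a i j)%:~R) &
      (forall (s : seq I) (c : I -> F), uniq s ->
          \sum_(i <- s) c i *: alpha i = 0 -> forall i, i \in s -> c i = 0)].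

Definition refl (i : I) (mu : V) : V := mu - alphav i mu *: alpha i.

Definition is_order (f : V -> V) (m : nat) : Prop :=
  [/\ (0 < m)%N, (forall v, iter m f v = v) &
      (forall k, (0 < k < m)%N -> (exists v, iter k f v <> v))].

(* words [:: i_k; ...; i_1] stand for r_{i_k} ... r_{i_1} *)
Inductive Wrel : seq I -> seq I -> Prop :=
| Wrel_sq i : is_real i -> Wrel [:: i; i] [::]
| Wrel_braid1 i j m : is_real i -> is_real j -> i != j -> m \in [:: 2; 3; 4; 6]%N ->
    is_order (refl i \o refl j) m -> Wrel (altw i j m) [::]
| Wrel_braid2 i j m : is_real i -> is_real j -> i != j -> m \in [:: 2; 3; 4; 6]%N ->
    is_order (refl i \o refl j) m -> Wrel (altw j i m) [::]
| Wrel_comm i j : ~~ is_real i -> j != i -> a i j = 0 -> Wrel [:: i; j] [:: j; i].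

Definition Weq : seq I -> seq I -> Prop := congr_cl Wrel.

(* the index set \tilde I, as a predicate on I * nat *)
Definition tvalid (p : I * nat) : bool :=
  if is_real p.1 then p.2 == 1%N else (0 < p.2)%N.

Definition cox_fin (p q : I * nat) (m : nat) : Prop :=
  if is_real p.1 && is_real q.1 then is_order (refl p.1 \o refl q.1) m
  else m = 2%N /\ a p.1 q.1 = 0.

(* Coxeter presentation of \mathfrak W, as a monoid presentation (generators
   are involutions, so this monoid is the group) *)
Inductive Crel : seq (I * nat) -> seq (I * nat) -> Prop :=
| Crel_sq p : tvalid p -> Crel [:: p; p] [::]
| Crel_cox p q m : tvalid p -> tvalid q -> p != q -> cox_fin p q m ->
    Crel (altw p q m) [::].

Definition Ceq : seq (I * nat) -> seq (I * nat) -> Prop := congr_cl Crel.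

End Realization.

(* (i, m) -> word of S_{(i,m)}: for i = [:: i_k; ...; i_1],
   m_s = 1 if i_s real, #{t <= s | i_t = i_s} otherwise *)
Fixpoint sigmaw (w : seq I) : seq (I * nat) :=
  match w with
  | [::] => [::]
  | i :: l => (i, if is_real i then 1%N else (count_mem i l).+1) :: sigmaw l
  end.

End BC.

(* sigma is well defined because every defining relation of \mathcal W, once its letters
   are labelled as in sigma, follows from the Coxeter relations of \mathfrak W: the label of
   an imaginary letter only counts its occurrences further right, and the relations preserve
   these counts.
   For injectivity, \mathfrak W acts on labelled words in which each imaginary letter occurs
   at most once, taken modulo the relations of \mathcal W lifted to labelled letters: s_p
   prepends p, except that an imaginary p which can be commuted to the front is cancelled.
   The Coxeter relations hold for this action -- for two real letters because the order of
   r_i r_j, computed on the plane spanned by alpha_i and alpha_j, is 2, 3, 4, 6 or infinite --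
   and sigma(w) applied to the empty word returns sigma(w) itself, whose underlying letters
   are w. *)

From HB Require Import structures.
From mathcomp Require Import all_boot all_order all_algebra.
From mathcomp Require Import ring zify.
From Stdlib Require Import ClassicalEpsilon Classical.
Import Order.TTheory GRing.Theory Num.Theory.
Local Open Scope ring_scope.

Set Implicit Arguments. Unset Strict Implicit. Unset Printing Implicit Defensive.

Section CongrClosure.
Variables (T : Type) (R : seq T -> seq T -> Prop).

Lemma congr_cl1 u v : R u v -> congr_cl R u v.
Proof. by move=> Ruv; have := cc_rel [::] [::] Ruv; rewrite !cats0. Qed.

Lemma congr_cl_ctx s t u v : congr_cl R u v -> congr_cl R (s ++ u ++ t) (s ++ v ++ t).
Proof.
elim=> [s' u' v' t' Ruv | w | w w' _ IH | w1 w2 w3 _ IH12 _ IH23].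
- by have := cc_rel (s ++ s') (t' ++ t) Ruv; rewrite !catA -!(catA _ _ t) -!catA.
- exact: cc_refl.
- exact: cc_sym.
- exact: cc_trans IH23.
Qed.

Lemma congr_cl_cons x u v : congr_cl R u v -> congr_cl R (x :: u) (x :: v).
Proof. by move=> Ruv; have := congr_cl_ctx [:: x] [::] Ruv; rewrite !cats0. Qed.

Lemma congr_cl_catl s u v : congr_cl R u v -> congr_cl R (s ++ u) (s ++ v).
Proof. by move=> Ruv; have := congr_cl_ctx s [::] Ruv; rewrite !cats0. Qed.

End CongrClosure.

Lemma congr_cl_map (T U : Type) (R : seq T -> seq T -> Prop) (R' : seq U -> seq U -> Prop)
    (g : T -> U) u v :
  (forall u' v', R u' v' -> congr_cl R' (map g u') (map g v')) ->
  congr_cl R u v -> congr_cl R' (map g u) (map g v).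
Proof.
move=> gR; elim=> [s u' v' t Ruv | w | w w' _ IH | w1 w2 w3 _ IH12 _ IH23].
- by rewrite !map_cat; apply: congr_cl_ctx; apply: gR.
- exact: cc_refl.
- exact: cc_sym.
- exact: cc_trans IH23.
Qed.

Lemma rem_cat (T : eqType) (x : T) s t :
  rem x (s ++ t) = if x \in s then rem x s ++ t else s ++ rem x t.
Proof.
elim: s => [|y s IHs] //; rewrite cat_cons !rem_cons in_cons (eq_sym y x).
by case: (x == y) => //=; rewrite IHs; case: (x \in s).
Qed.

Lemma remC (T : eqType) (x y : T) s : rem x (rem y s) = rem y (rem x s).
Proof.
elim: s => [|z s IHs] //; rewrite !(rem_cons _ z).
have [eq_zy | neq_zy] := eqVneq z y; have [eq_zx | neq_zx] := eqVneq z x.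
- by rewrite -eq_zx -eq_zy.
- by rewrite rem_cons eq_zy eqxx.
- by rewrite rem_cons eq_zx eqxx.
- by rewrite !rem_cons (negbTE neq_zy) (negbTE neq_zx) IHs.
Qed.

Lemma count_altw (T : eqType) (r p q : T) m :
  r != p -> r != q -> count_mem r (altw p q m) = 0%N.
Proof.
move=> neq_rp neq_rq; elim: m => [|m IHm] //=.
by rewrite IHm eq_sym (negbTE neq_rp) eq_sym (negbTE neq_rq).
Qed.

Lemma all_altw (T : Type) (P : pred T) p q m : P p -> P q -> all P (altw p q m).
Proof. by move=> Pp Pq; elim: m => [|m IHm] //=; rewrite Pp Pq. Qed.

Lemma map_altw (T U : Type) (f : T -> U) p q m : map f (altw p q m) = altw (f p) (f q) m.
Proof. by elim: m => [|m IHm] //=; rewrite IHm. Qed.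

Lemma altw_rot (T : Type) (p q : T) m : q :: altw p q m = altw q p m ++ [:: q].
Proof. by elim: m => [|m IHm] //=; rewrite -IHm. Qed.

Lemma mem_rem_neq (T : eqType) (x y : T) s : y != x -> (y \in rem x s) = (y \in s).
Proof. by move=> neq_yx; apply/idP/idP => [/mem_rem | /(rem_mem neq_yx)]. Qed.

(* The matrix of r_i r_j on the plane spanned by alpha_i and alpha_j, in these coordinates,
   for A = a_ij and B = a_ji (see refl_comp_comb). *)
Definition rr_plane (R : comNzRingType) (A B : R) (x : R * R) : R * R :=
  ((A * B - 1) * x.1 + A * x.2, - (B * x.1) - x.2).

(* The sum of (rr_plane A B)^l s over l < k: the coordinates of (r_i r_j)^k v - v when s
   are those of r_i r_j v - v (see iter_refl_comp). *)
Definition rr_sum (R : comNzRingType) (A B : R) (s : R * R) (k : nat) : R * R :=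
  iter k (fun x => (s.1 + (rr_plane A B x).1, s.2 + (rr_plane A B x).2)) (0, 0).

Lemma iter_rr_plane_rmorph (R S : comNzRingType) (f : {rmorphism R -> S}) A B x k :
  iter k (rr_plane (f A) (f B)) (f x.1, f x.2) =
  (f (iter k (rr_plane A B) x).1, f (iter k (rr_plane A B) x).2).
Proof.
elim: k => [|k IHk] //=; rewrite IHk /rr_plane /=.
by rewrite !(rmorphD, rmorphB, rmorphM, rmorphN) rmorph1.
Qed.

Lemma rr_plane_rec (R : comNzRingType) (A B : R) x :
  rr_plane A B (rr_plane A B x) =
  ((A * B - 2) * (rr_plane A B x).1 - x.1, (A * B - 2) * (rr_plane A B x).2 - x.2).
Proof. by rewrite /rr_plane /=; congr (_, _); ring. Qed.

Lemma rr_plane_no_fixpoint (A B : int) k : A < 0 -> B < 0 -> 4 <= A * B -> (0 < k)%N ->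
  iter k (rr_plane A B) (1, 0) != (1, 0).
Proof.
move=> A_lt0 B_lt0 AB_ge4.
pose e n : int := (iter n (rr_plane A B) (1, 0)).2.
have e_rec n : e n.+2 = (A * B - 2) * e n.+1 - e n by rewrite /e !iterS rr_plane_rec.
have step (x y p : int) : 4 <= p -> 0 <= x < y -> 0 <= y < (p - 2) * y - x by nia.
have e_incr n : 0 <= e n < e n.+1.
  elim: n => [|n]; first by rewrite /e /rr_plane /=; lia.
  by rewrite e_rec; apply: step.
case: k => // k _; apply/eqP => fix1.
by have := e_incr k; rewrite /e fix1 /= => /andP [/le_lt_trans lt /lt]; rewrite ltxx.
Qed.

Section RootPlane.
Variables (I : countType) (a : I -> I -> int) (F : fieldType) (V : lmodType F).
Variables (alpha : I -> V) (alphav : I -> V -> F).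
Hypothesis aR : realization a alpha alphav.

Lemma corootD i u v : alphav i (u + v) = alphav i u + alphav i v.
Proof. by case: aR => _ lin _ _; rewrite -[u]scale1r lin mul1r scale1r. Qed.

Lemma corootZ i c u : alphav i (c *: u) = c * alphav i u.
Proof.
have coroot0 : alphav i 0 = 0 by apply: (addIr (alphav i 0)); rewrite -corootD !add0r.
by case: aR => _ lin _ _; rewrite -[c *: u]addr0 lin coroot0 addr0.
Qed.

Lemma coroot_alpha i j : alphav i (alpha j) = (a i j)%:~R.
Proof. by case: aR. Qed.

Lemma intr_inj_pchar0 : injective (fun z : int => z%:~R : F).
Proof.
have natr_eq0 : forall n, (n%:R == 0 :> F) = (n == 0)%N.
  by case: aR => F0 _ _ _; apply/pcharf0P.
have intr_eq0 (z : int) : z%:~R = 0 :> F -> z = 0.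
  by case: z => n /eqP; rewrite ?NegzE ?mulrNz ?oppr_eq0 natr_eq0 => /eqP ->.
by move=> z1 z2 /= /eqP; rewrite -subr_eq0 -intrB => /eqP /intr_eq0 /subr0_eq.
Qed.

Variables (i j : I).
Hypotheses (i_real : is_real a i) (j_real : is_real a j) (neq_ij : i != j).

Local Notation f := (refl alpha alphav i \o refl alpha alphav j).
Local Notation A := ((a i j)%:~R : F).
Local Notation B := ((a j i)%:~R : F).

Definition comb (x : F * F) : V := x.1 *: alpha i + x.2 *: alpha j.

Lemma comb_add x y : comb x + comb y = comb (x.1 + y.1, x.2 + y.2).
Proof. by rewrite /comb !scalerDl addrACA. Qed.

Lemma comb_inj x y : comb x = comb y -> x = y.
Proof.
move=> /eqP; rewrite -subr_eq0.
have -> : comb x - comb y = comb (x.1 - y.1, x.2 - y.2).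
  by rewrite /comb !scalerBl opprD addrACA.
have uniq_ij : uniq [:: i; j] by rewrite /= inE neq_ij.
have neq_ji : j != i by rewrite eq_sym.
case: aR => _ _ _ /(_ _ (fun k => if k == i then x.1 - y.1 else x.2 - y.2) uniq_ij).
rewrite !big_cons big_nil eqxx (negbTE neq_ji) addr0 => indep /eqP /indep c0.
have := c0 j; have := c0 i; rewrite !inE !eqxx orbT (negbTE neq_ji).
by case: x y {c0 indep} => [? ?] [? ?] /= /(_ isT)/subr0_eq -> /(_ isT)/subr0_eq ->.
Qed.

Lemma coroot_comb k x : alphav k (comb x) = x.1 * (a k i)%:~R + x.2 * (a k j)%:~R.
Proof. by rewrite corootD !corootZ !coroot_alpha. Qed.

Lemma refl_comp_step v : f v = v + comb (alphav j v * A - alphav i v, - alphav j v).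
Proof.
rewrite /= /refl corootD -(scaleNr (alphav j v)) corootZ coroot_alpha /comb /= -addrA.
congr (v + _); rewrite addrC scaleNr; congr (_ + _).
by rewrite -scaleNr; congr (_ *: _); ring.
Qed.

Let aii : (a i i)%:~R = 2 :> F. Proof. by move/eqP: i_real => ->. Qed.
Let ajj : (a j j)%:~R = 2 :> F. Proof. by move/eqP: j_real => ->. Qed.

Lemma refl_comp_comb x : f (comb x) = comb (rr_plane A B x).
Proof.
rewrite refl_comp_step !coroot_comb aii ajj comb_add /rr_plane /=.
by congr (comb (_, _)); ring.
Qed.

Lemma iter_refl_comp_comb k x : iter k f (comb x) = comb (iter k (rr_plane A B) x).
Proof. by elim: k => [|k IHk] //; rewrite !iterS IHk refl_comp_comb. Qed.

Lemma iter_refl_comp k v :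
  iter k f v = v + comb (rr_sum A B (alphav j v * A - alphav i v, - alphav j v) k).
Proof.
rewrite /rr_sum; elim: k => [|k IHk]; first by rewrite /comb /= !scale0r !addr0.
rewrite iterS IHk refl_comp_step (corootD i v) (corootD j v) !coroot_comb aii ajj.
rewrite -addrA comb_add iterS.
by congr (v + comb (_, _)); rewrite /rr_plane /=; ring.
Qed.

Lemma is_order_rr_plane m : is_order f m -> iter m (rr_plane (a i j) (a j i)) (1, 0) = (1, 0).
Proof.
case=> _ fix_m _; have := fix_m (alpha i).
have -> : alpha i = comb ((1 : int)%:~R, (0 : int)%:~R).
  by rewrite /comb /= rmorph1 rmorph0 scale1r scale0r addr0.
rewrite iter_refl_comp_comb.
rewrite (iter_rr_plane_rmorph (intr : {rmorphism int -> F}) (a i j) (a j i) (1, 0)).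
move=> /comb_inj [].
by case: (iter m _ _) => c e /= /intr_inj_pchar0 -> /intr_inj_pchar0 ->.
Qed.

Lemma iter_refl_comp_id d : (forall s, rr_sum A B s d = (0, 0)) -> forall v, iter d f v = v.
Proof. by move=> sum_eq0 v; rewrite iter_refl_comp sum_eq0 /comb !scale0r !addr0. Qed.

Lemma is_order_refl_comp_eq (x y : int) d m : a i j = x -> a j i = y -> (0 < d)%N ->
  (forall s : F * F, rr_sum x%:~R y%:~R s d = (0, 0)) ->
  all (fun k => iter k (rr_plane x y) (1, 0) != (1, 0)) (iota 1 d.-1) ->
  is_order f m -> m = d.
Proof.
move=> <- <- d_gt0 sum_eq0 /allP no_fix ord_m; have [m_gt0 _ min_m] := ord_m.
case: (ltngtP m d) => // [lt_md | lt_dm].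
  have /no_fix : m \in iota 1 d.-1 by rewrite mem_iota m_gt0 add1n prednK.
  by rewrite is_order_rr_plane ?eqxx.
by have [|v []] := min_m d; rewrite ?d_gt0 // iter_refl_comp_id.
Qed.

Lemma refl_comp_order m : BC_matrix a -> is_order f m -> m \in [:: 2; 3; 4; 6]%N.
Proof.
case=> _ a_le0 a_eq0 ord_m; have [m_gt0 _ _] := ord_m.
have a_ij_le0 := a_le0 i j neq_ij; have a_ji_le0 : a j i <= 0 by rewrite a_le0 // eq_sym.
have [AB_ge4 | AB_lt4] := lerP 4 (a i j * a j i).
  have a_ij_lt0 : a i j < 0 by nia.
  have a_ji_lt0 : a j i < 0 by nia.
  by have := rr_plane_no_fixpoint a_ij_lt0 a_ji_lt0 AB_ge4 m_gt0; rewrite is_order_rr_plane ?eqxx.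
have : (a i j = 0 /\ a j i = 0) \/ (a i j = -1 /\ a j i = -1) \/
       (a i j = -1 /\ a j i = -2) \/ (a i j = -2 /\ a j i = -1) \/
       (a i j = -1 /\ a j i = -3) \/ (a i j = -3 /\ a j i = -1).
  by case: (a_eq0 i j); lia.
case=> [|[|[|[|[|]]]]] [e_ij e_ji];
  [ rewrite (is_order_refl_comp_eq (d := 2) e_ij e_ji _ _ _ ord_m)
  | rewrite (is_order_refl_comp_eq (d := 3) e_ij e_ji _ _ _ ord_m)
  | rewrite (is_order_refl_comp_eq (d := 4) e_ij e_ji _ _ _ ord_m)
  | rewrite (is_order_refl_comp_eq (d := 4) e_ij e_ji _ _ _ ord_m)
  | rewrite (is_order_refl_comp_eq (d := 6) e_ij e_ji _ _ _ ord_m)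
  | rewrite (is_order_refl_comp_eq (d := 6) e_ij e_ji _ _ _ ord_m) ] => // -[s t];
  by rewrite /rr_sum /rr_plane /=; f_equal; ring.
Qed.
End RootPlane.


Section WellDefined.
Variables (I : countType) (a : I -> I -> int) (F : fieldType) (V : lmodType F).
Variables (alpha : I -> V) (alphav : I -> V -> F).

Local Notation T := (I * nat)%type.
Local Notation isr := (is_real a).
Local Notation Wrel := (Wrel a alpha alphav).
Local Notation Weq := (Weq a alpha alphav).
Local Notation Ceq := (Ceq a alpha alphav).

Lemma Ceq_sq p u : tvalid a p -> Ceq (p :: p :: u) u.
Proof. by move=> p_valid; apply: (cc_rel [::] u (Crel_sq _ _ p_valid)). Qed.

Lemma Ceq_altw_sym p q m : tvalid a q -> Ceq (altw p q m) [::] -> Ceq (altw q p m) [::].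
Proof.
move=> q_valid Cpq; apply: cc_trans (_ : Ceq _ (altw q p m ++ [:: q; q])) _.
  by apply: cc_sym; have := congr_cl_catl (altw q p m) (Ceq_sq [::] q_valid); rewrite cats0.
rewrite -cat1s catA -altw_rot; apply: cc_trans (_ : Ceq _ ([:: q] ++ [::] ++ [:: q])) _.
  by rewrite -cat1s -catA; apply: congr_cl_ctx.
exact: Ceq_sq.
Qed.

Lemma Ceq_comm p q : tvalid a p -> tvalid a q ->
  Ceq [:: p; q; p; q] [::] -> Ceq [:: p; q] [:: q; p].
Proof.
move=> p_valid q_valid Cpq; apply: cc_sym.
apply: cc_trans (_ : Ceq _ ([:: q; p] ++ [:: p; q; p; q])) _.
  by apply: cc_sym; have := congr_cl_catl [:: q; p] Cpq; rewrite cats0.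
apply: cc_trans (_ : Ceq _ ([:: q] ++ [::] ++ [:: q; p; q])) _.
  exact: (congr_cl_ctx [:: q] [:: q; p; q] (Ceq_sq [::] p_valid)).
exact: Ceq_sq.
Qed.

Fixpoint sigmaw_off (c : I -> nat) (w : seq I) : seq T :=
  if w is i :: l then (i, if isr i then 1%N else (count_mem i l + c i).+1) :: sigmaw_off c l
  else [::].

Lemma sigmaw_off0 w : sigmaw a w = sigmaw_off (fun _ => 0%N) w.
Proof. by elim: w => [|i w IHw] //=; rewrite IHw addn0. Qed.

Lemma sigmaw_off_cat c s w :
  sigmaw_off c (s ++ w) = sigmaw_off (fun i => count_mem i w + c i)%N s ++ sigmaw_off c w.
Proof. by elim: s => [|i s IHs] //=; rewrite IHs count_cat addnA. Qed.

Lemma eq_sigmaw_off c c' w : (forall i, ~~ isr i -> c i = c' i) ->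
  sigmaw_off c w = sigmaw_off c' w.
Proof.
move=> eq_cc'; elim: w => [|i w IHw] //=; rewrite IHw.
by case: (boolP (isr i)) => // i_imag; rewrite eq_cc'.
Qed.

Lemma Wrel_count i u v : ~~ isr i -> Wrel u v -> count_mem i u = count_mem i v.
Proof.
move=> i_imag; have neq_real j : isr j -> i != j by move=> j_real; apply: contraNneq i_imag => ->.
case=> [j j_real | j k m j_real k_real _ _ _ | j k m j_real k_real _ _ _ | j k _ _ _] /=.
- by rewrite eq_sym (negbTE (neq_real j j_real)).
- by rewrite count_altw ?neq_real.
- by rewrite count_altw ?neq_real.
- by rewrite !addn0 addnC.
Qed.

Lemma tvalid_label i n : tvalid a (i, if isr i then 1%N else n.+1).
Proof. by rewrite /tvalid /=; case: (isr i). Qed.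

Lemma sigmaw_off_altw c i j m : isr i -> isr j ->
  sigmaw_off c (altw i j m) = altw (i, 1%N) (j, 1%N) m.
Proof. by move=> i_real j_real; elim: m => [|m IHm] //=; rewrite i_real j_real IHm. Qed.

Lemma Wrel_Ceq c u v : Wrel u v -> Ceq (sigmaw_off c u) (sigmaw_off c v).
Proof.
have real_valid i : isr i -> tvalid a (i, 1%N) by rewrite /tvalid /= => ->.
case=> [i i_real | i j m i_real j_real neq_ij _ ord_m | i j m i_real j_real neq_ij _ ord_m |
        i j i_imag neq_ji a_ij].
- by rewrite /= i_real; apply/Ceq_sq/real_valid.
- rewrite sigmaw_off_altw //; apply/congr_cl1/Crel_cox; rewrite ?real_valid //.
    by apply: contra neq_ij => /eqP [->].
  by rewrite /cox_fin /= i_real j_real.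
- rewrite sigmaw_off_altw //; apply/Ceq_altw_sym/congr_cl1/Crel_cox; rewrite ?real_valid //.
    by apply: contra neq_ij => /eqP [->].
  by rewrite /cox_fin /= i_real j_real.
- have neq_ij : i != j by rewrite eq_sym.
  rewrite /= (negbTE i_imag) (negbTE neq_ji) (negbTE neq_ij) /= !add0n.
  set p := (i, _); set q := (j, _).
  have p_valid : tvalid a p by rewrite /tvalid /= (negbTE i_imag).
  apply: Ceq_comm => //; first exact: tvalid_label.
  apply: congr_cl1 (Crel_cox (m := 2) p_valid (tvalid_label _ _) _ _) => //.
    by apply: contra neq_ji => /eqP [->].
  by rewrite /cox_fin /= (negbTE i_imag).
Qed.

Lemma Weq_Ceq w w' : Weq w w' -> Ceq (sigmaw a w) (sigmaw a w').
Proof.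
rewrite !sigmaw_off0; elim=> [s u v t Ruv | x | x x' _ IH | w1 w2 w3 _ IH12 _ IH23].
- rewrite !sigmaw_off_cat (@eq_sigmaw_off _ (fun i => count_mem i (v ++ t) + 0)%N s).
    exact/congr_cl_ctx/Wrel_Ceq.
  by move=> i i_imag; rewrite !count_cat (Wrel_count i_imag Ruv).
- exact: cc_refl.
- exact: cc_sym.
- exact: cc_trans IH23.
Qed.

End WellDefined.

Section LabelledWords.
Variables (I : countType) (a : I -> I -> int) (F : fieldType) (V : lmodType F).
Variables (alpha : I -> V) (alphav : I -> V -> F).

Local Notation T := (I * nat)%type.
Local Notation isr := (is_real a).
Local Notation Weq := (Weq a alpha alphav).
Local Notation Crel := (Crel a alpha alphav).
Local Notation Ceq := (Ceq a alpha alphav).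

(* Distinct imaginary letters with the same underlying i commute when a_ii = 0. *)
Inductive Lrel : seq T -> seq T -> Prop :=
| Lrel_sq p : isr p.1 -> Lrel [:: p; p] [::]
| Lrel_braid p q m : isr p.1 -> isr q.1 -> p.1 != q.1 ->
    is_order (refl alpha alphav p.1 \o refl alpha alphav q.1) m -> Lrel (altw p q m) [::]
| Lrel_comm p q : ~~ isr p.1 -> p != q -> a p.1 q.1 = 0 -> Lrel [:: p; q] [:: q; p].

Definition Leq := congr_cl Lrel.

Lemma Leq_sq p u : isr p.1 -> Leq (p :: p :: u) u.
Proof. by move=> p_real; apply: (cc_rel [::] u (Lrel_sq p_real)). Qed.

Lemma Leq_comm p q u : ~~ isr p.1 -> p != q -> a p.1 q.1 = 0 -> Leq (p :: q :: u) (q :: p :: u).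
Proof. by move=> p_imag neq_pq a_pq; apply: (cc_rel [::] u (Lrel_comm p_imag neq_pq a_pq)). Qed.

Section ImaginaryLetter.
Variables (r : T).
Hypothesis r_imag : ~~ isr r.1.

Lemma imag_neq_real p : isr p.1 -> r != p.
Proof. by move=> p_real; apply: contraNneq r_imag => ->. Qed.

Lemma Lrel_count u v : Lrel u v -> count_mem r u = count_mem r v.
Proof.
case=> [p p_real | p q m p_real q_real _ _ | p q _ _ _] /=.
- by rewrite eq_sym (negbTE (imag_neq_real p_real)).
- by rewrite count_altw ?imag_neq_real.
- by rewrite !addn0 addnC.
Qed.

Lemma Leq_count u v : Leq u v -> count_mem r u = count_mem r v.
Proof.
elim=> [s u' v' t Ruv | w | w w' _ IH | w1 w2 w3 _ IH12 _ IH23] //.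
- by rewrite !count_cat (Lrel_count Ruv).
- by rewrite IH12.
Qed.

Lemma Leq_mem u v : Leq u v -> (r \in u) = (r \in v).
Proof. by move=> Luv; rewrite -!has_pred1 !has_count (Leq_count Luv). Qed.

Lemma Lrel_rem u v : Lrel u v -> r \in u -> rem r u = rem r v.
Proof.
case=> [p p_real | p q m p_real q_real _ _ | p q _ neq_pq _].
- by rewrite !inE orbb (negbTE (imag_neq_real p_real)).
- by rewrite -has_pred1 has_count count_altw ?imag_neq_real.
- rewrite !inE /= => /orP [] /eqP ->; rewrite eqxx ?(negbTE neq_pq) //.
  by rewrite eq_sym (negbTE neq_pq).
Qed.

Lemma Leq_rem u v : Leq u v -> Leq (rem r u) (rem r v).
Proof.
elim=> [s u' v' t Ruv | w | w w' _ IH | w1 w2 w3 _ IH12 _ IH23].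
- rewrite !rem_cat -(Leq_mem (congr_cl1 Ruv)).
  case: (r \in s); first exact: cc_rel.
  by case: ifP => r_in; [rewrite (Lrel_rem Ruv r_in); apply: cc_refl | apply: cc_rel].
- exact: cc_refl.
- exact: cc_sym.
- exact: cc_trans IH23.
Qed.

End ImaginaryLetter.

Definition movable p u := exists x, Leq u (p :: x).

(* The action of s_p. When an imaginary p occurs in u but cannot be commuted to the front,
   u is left unchanged: an arbitrary choice that makes act total. *)
Definition act (p : T) (u : seq T) : seq T :=
  if isr p.1 || (p \notin u) then p :: u
  else if excluded_middle_informative (movable p u) then rem p u else u.

Lemma act_cons p u : isr p.1 || (p \notin u) -> act p u = p :: u.
Proof. by rewrite /act => ->. Qed.

Lemma Leq_cons_rem p u x : ~~ isr p.1 -> Leq u (p :: x) -> Leq u (p :: rem p u).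
Proof.
move=> p_imag Lux; have := Leq_rem p_imag Lux; rewrite /= eqxx => Lrem.
exact: cc_trans Lux (congr_cl_cons p (cc_sym Lrem)).
Qed.

Lemma act_movable p u x : ~~ isr p.1 -> Leq u (p :: x) -> act p u = rem p u.
Proof.
move=> p_imag Lux; rewrite /act (negbTE p_imag) (Leq_mem p_imag Lux) mem_head /=.
by case: excluded_middle_informative => // -[]; exists x.
Qed.

Lemma act_stuck p u : ~~ isr p.1 -> p \in u -> ~ movable p u -> act p u = u.
Proof.
move=> p_imag p_in stuck; rewrite /act (negbTE p_imag) p_in.
by case: excluded_middle_informative.
Qed.

Lemma mem_act_neq p q u : q != p -> (q \in act p u) = (q \in u).
Proof.
move=> neq_qp; rewrite /act; case: ifP => _; first by rewrite in_cons (negbTE neq_qp).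
by case: excluded_middle_informative => _ /=; rewrite ?mem_rem_neq.
Qed.

Lemma act_compat p u v : Leq u v -> Leq (act p u) (act p v).
Proof.
move=> Luv; rewrite /act; case: (boolP (isr p.1)) => [_ | p_imag] /=; first exact: congr_cl_cons.
rewrite -(Leq_mem p_imag Luv); case: ifP => _; first exact: congr_cl_cons.
have mov_uv : movable p u <-> movable p v.
  by split=> -[x Lx]; exists x; [apply: cc_trans (cc_sym Luv) Lx | apply: cc_trans Luv Lx].
case: excluded_middle_informative => [mov_u | stuck_u];
  case: excluded_middle_informative => [mov_v | stuck_v] //.
- exact: Leq_rem.
- by case: stuck_v; apply/mov_uv.
- by case: stuck_u; apply/mov_uv.
Qed.

Definition uniq_imag (u : seq T) := forall r, ~~ isr r.1 -> (count_mem r u <= 1)%N.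

Lemma uniq_imag_act p u : uniq_imag u -> uniq_imag (act p u).
Proof.
move=> uniq_u r r_imag; rewrite /act; case: ifP => [p_cons | _].
  rewrite /=; have [eq_pr | _] := eqVneq p r; last exact: uniq_u.
  by move: p_cons; rewrite eq_pr (negbTE r_imag) /= => /count_memPn ->.
case: excluded_middle_informative => _ /=; last exact: uniq_u.
rewrite count_mem_rem.
exact: leq_trans (leq_subr _ _) (uniq_u r r_imag).
Qed.

Lemma notin_rem_uniq_imag p u : ~~ isr p.1 -> uniq_imag u -> p \notin rem p u.
Proof.
move=> p_imag uniq_u; rewrite -has_pred1 has_count -leqNgt count_mem_rem eqxx leq_subLR.
by rewrite addn0 (uniq_u p p_imag).
Qed.

Lemma act_invol p u : uniq_imag u -> Leq (act p (act p u)) u.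
Proof.
move=> uniq_u; have [p_real | p_imag] := boolP (isr p.1).
  by rewrite !act_cons ?p_real //; apply: Leq_sq.
have [p_in | p_notin] := boolP (p \in u); last first.
  rewrite [act p u]act_cons ?p_notin ?orbT // (act_movable p_imag (cc_refl _ (p :: u))) /=.
  by rewrite eqxx; apply: cc_refl.
have [[x Lux] | stuck] := classic (movable p u); last by rewrite !act_stuck //; apply: cc_refl.
rewrite (act_movable p_imag Lux) act_cons ?notin_rem_uniq_imag ?orbT //.
exact/cc_sym/(Leq_cons_rem p_imag Lux).
Qed.

Section Commutation.
Variables (p q : T).
Hypotheses (p_imag : ~~ isr p.1) (neq_pq : p != q) (a_pq : a p.1 q.1 = 0).

Lemma movable_cons_cancel u y :
  isr q.1 || (q \notin u) -> Leq (q :: u) (p :: y) -> movable p u.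
Proof.
have [q_real _ Lqu | q_imag /= q_notin Lqu] := boolP (isr q.1).
  exists (q :: y); apply: cc_trans (cc_sym (Leq_sq u q_real)) _.
  by apply: cc_trans (congr_cl_cons q Lqu) _; apply/cc_sym/Leq_comm.
exists (rem q y); have := Leq_rem q_imag Lqu.
by rewrite /= eqxx (negbTE neq_pq).
Qed.

Lemma act_cons_comm u : isr q.1 || (q \notin u) -> Leq (act p (q :: u)) (q :: act p u).
Proof.
move=> q_cons; have neq_qp : q != p by rewrite eq_sym.
have [p_in | p_notin] := boolP (p \in u); last first.
  by rewrite !act_cons ?in_cons ?(negbTE neq_pq) ?p_notin ?orbT //; apply: Leq_comm.
have [[x Lux] | stuck] := classic (movable p u).
  have Lqux : Leq (q :: u) (p :: q :: x).
    by apply: cc_trans (congr_cl_cons q Lux) _; apply/cc_sym/Leq_comm.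
  rewrite (act_movable p_imag Lux) (act_movable p_imag Lqux) /= (negbTE neq_qp).
  exact: cc_refl.
rewrite (act_stuck p_imag p_in stuck) act_stuck ?in_cons ?p_in ?orbT //; first exact: cc_refl.
by move=> [y Ly]; apply: stuck; apply: movable_cons_cancel Ly.
Qed.

Hypothesis q_imag : ~~ isr q.1.

Lemma act_comm_movable u x y : Leq u (p :: x) -> Leq u (q :: y) ->
  act p (act q u) = act q (act p u).
Proof.
move=> Lux Luy; have neq_qp : q != p by rewrite eq_sym.
have Lqux : Leq (rem q u) (p :: rem q x) by have := Leq_rem q_imag Lux; rewrite /= (negbTE neq_pq).
have Lpuy : Leq (rem p u) (q :: rem p y) by have := Leq_rem p_imag Luy; rewrite /= (negbTE neq_qp).
rewrite (act_movable q_imag Luy) (act_movable p_imag Lux).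
by rewrite (act_movable p_imag Lqux) (act_movable q_imag Lpuy) remC.
Qed.

Lemma act_comm_stuck u x : Leq u (p :: x) -> q \in u -> ~ movable q u ->
  act p (act q u) = act q (act p u).
Proof.
move=> Lux q_in q_stuck; have neq_qp : q != p by rewrite eq_sym.
rewrite (act_stuck q_imag q_in q_stuck) (act_movable p_imag Lux) act_stuck //.
  by rewrite mem_rem_neq.
move=> [z Lz]; apply: q_stuck; exists (p :: z).
apply: cc_trans (Leq_cons_rem p_imag Lux) _; apply: cc_trans (congr_cl_cons p Lz) _.
exact: Leq_comm.
Qed.

End Commutation.

Lemma act_comm p q u : ~~ isr p.1 -> p != q -> a p.1 q.1 = 0 -> a q.1 p.1 = 0 ->
  Leq (act p (act q u)) (act q (act p u)).
Proof.
move=> p_imag neq_pq a_pq a_qp; have neq_qp : q != p by rewrite eq_sym.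
have [q_real | q_imag] := boolP (isr q.1).
  have q_cons (v : seq T) : isr q.1 || (q \notin v) by rewrite q_real.
  by rewrite !(act_cons (q_cons _)); apply: act_cons_comm.
have [q_in | q_notin] := boolP (q \in u); last first.
  have q_cons : isr q.1 || (q \notin u) by rewrite q_notin orbT.
  have q_cons' : isr q.1 || (q \notin act p u) by rewrite mem_act_neq // q_notin orbT.
  by rewrite (act_cons q_cons) (act_cons q_cons'); apply: act_cons_comm.
have [p_in | p_notin] := boolP (p \in u); last first.
  have p_cons : isr p.1 || (p \notin u) by rewrite p_notin orbT.
  have p_cons' : isr p.1 || (p \notin act q u) by rewrite mem_act_neq // p_notin orbT.
  by rewrite (act_cons p_cons) (act_cons p_cons'); apply/cc_sym/act_cons_comm.
have [[x Lux] | p_stuck] := classic (movable p u);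
  have [[y Luy] | q_stuck] := classic (movable q u).
- by rewrite (act_comm_movable p_imag neq_pq q_imag Lux Luy); apply: cc_refl.
- by rewrite (act_comm_stuck p_imag neq_pq a_pq q_imag Lux q_in q_stuck); apply: cc_refl.
- by rewrite -(act_comm_stuck q_imag neq_qp a_qp p_imag Luy p_in p_stuck); apply: cc_refl.
- by rewrite !act_stuck //; apply: cc_refl.
Qed.

Local Notation actw z w := (foldr act z w).

Lemma uniq_imag_actw z w : uniq_imag z -> uniq_imag (actw z w).
Proof. by move=> uniq_z; elim: w => [|p w IHw] //=; apply: uniq_imag_act. Qed.

Lemma actw_compat w u v : Leq u v -> Leq (actw u w) (actw v w).
Proof. by move=> Luv; elim: w => [|p w IHw] //=; apply: act_compat. Qed.

Lemma actw_real z w : all (fun p : T => isr p.1) w -> actw z w = w ++ z.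
Proof. by elim: w => [|p w IHw] //= /andP [p_real w_real]; rewrite act_cons ?p_real // IHw. Qed.

Section CoxeterAction.
Hypothesis a_sym0 : forall i j, a i j = 0 -> a j i = 0.

Lemma Crel_act u v z : Crel u v -> uniq_imag z -> Leq (actw z u) (actw z v).
Proof.
case=> [p _ | p q m p_valid q_valid neq_pq cox_pq] uniq_z; first exact: act_invol.
move: cox_pq; rewrite /cox_fin.
have [/andP [p_real q_real] /= ord_m | pq_imag /= [-> a_pq]] := boolP (isr p.1 && isr q.1).
  have neq_pq1 : p.1 != q.1.
    apply: contra neq_pq => /eqP eq_pq1; move: p_valid q_valid.
    rewrite /tvalid p_real q_real => /eqP p2 /eqP q2.
    by apply/eqP/injective_projections; rewrite ?p2 ?q2.
  rewrite actw_real ?all_altw //; exact: (cc_rel [::] z (Lrel_braid p_real q_real neq_pq1 ord_m)).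
have comm w : Leq (act p (act q w)) (act q (act p w)).
  have [p_real | p_imag] := boolP (isr p.1); last by apply: act_comm => //; apply: a_sym0.
  have q_imag : ~~ isr q.1 by rewrite p_real in pq_imag.
  by apply/cc_sym/act_comm => //; [rewrite eq_sym | apply: a_sym0].
apply: cc_trans (act_compat p (cc_sym (comm (act q z)))) _ => /=.
apply: cc_trans (act_invol p (uniq_imag_act q (uniq_imag_act q uniq_z))) _.
exact: act_invol.
Qed.

Lemma Ceq_act x y z : Ceq x y -> uniq_imag z -> Leq (actw z x) (actw z y).
Proof.
move=> Cxy; elim: Cxy z => [s u v t Cuv | w | w w' _ IH | w1 w2 w3 _ IH12 _ IH23] z uniq_z.
- by rewrite !foldr_cat; apply/actw_compat/Crel_act/uniq_imag_actw.
- exact: cc_refl.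
- exact: cc_sym (IH z uniq_z).
- exact: cc_trans (IH12 z uniq_z) (IH23 z uniq_z).
Qed.

End CoxeterAction.

Lemma sigmaw_label_le i n w : ~~ isr i -> (i, n) \in sigmaw a w -> (n <= count_mem i w)%N.
Proof.
move=> i_imag; elim: w => [|j w IHw] //=; rewrite in_cons => /orP [/eqP [<- ->] | /IHw].
  by rewrite (negbTE i_imag) eqxx.
by move/leq_trans; apply; rewrite leq_addl.
Qed.

Lemma actw_sigmaw w : actw [::] (sigmaw a w) = sigmaw a w.
Proof.
elim: w => [|i w IHw] //=; rewrite IHw act_cons //=.
by case: (boolP (isr i)) => //= i_imag; apply/negP => /(sigmaw_label_le i_imag); rewrite ltnn.
Qed.

Lemma map_sigmaw w : map fst (sigmaw a w) = w.
Proof. by elim: w => [|i w IHw] //=; rewrite IHw. Qed.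

Lemma Leq_Weq x y : BC_matrix a -> realization a alpha alphav ->
  Leq x y -> Weq (map fst x) (map fst y).
Proof.
move=> aBC aR; apply: congr_cl_map => u v.
case=> [p p_real | p q m p_real q_real neq_pq1 ord_m | p q p_imag _ a_pq].
- exact/congr_cl1/Wrel_sq.
- rewrite map_altw; apply/congr_cl1/Wrel_braid1 => //.
  exact: (refl_comp_order aR p_real q_real neq_pq1 aBC ord_m).
- rewrite /=; have [-> | neq_qp1] := eqVneq q.1 p.1; first exact: cc_refl.
  exact/congr_cl1/Wrel_comm.
Qed.

Lemma Ceq_sigmaw_Weq w w' : BC_matrix a -> realization a alpha alphav ->
  Ceq (sigmaw a w) (sigmaw a w') -> Weq w w'.
Proof.
move=> aBC aR Cww'; have a_sym0 i j : a i j = 0 -> a j i = 0 by case: aBC => _ _ /(_ i j) [].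
have uniq_nil : uniq_imag [::] by [].
have := Ceq_act a_sym0 Cww' uniq_nil; rewrite !actw_sigmaw.
by move/(Leq_Weq aBC aR); rewrite !map_sigmaw.
Qed.

End LabelledWords.

Unset Implicit Arguments.

Theorem lemma2p2p5 (I : countType) (a : I -> I -> int)
  (F : fieldType) (V : lmodType F) (alpha : I -> V) (alphav : I -> V -> F) :
  BC_matrix a -> realization a alpha alphav ->
  forall w w' : seq I,
    Weq a alpha alphav w w' <-> Ceq a alpha alphav (sigmaw a w) (sigmaw a w').
Proof.
move=> aBC aR w w'; split; first exact: Weq_Ceq.
exact: Ceq_sigmaw_Weq.
Qed.
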